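(* Let $q\in\mathbb{C}^\times$ be not a root of unity, $k\in\mathbb{Z}_{>0}$, $\mathbf{x}=(x_1,\dots,x_k)$, $t\in\mathbb{Z}_{>0}$ and $Q,\beta\in\mathbb{C}^\times$, $\tilde\beta=(q-q^{-1})^{-1}(1-\beta^{-2})$. Then: (i) $p^{\langle Q\rangle}_t(q;\beta)(\mathbf{x})=(-1)^{t-1}q^{-t}[t]e_t(\mathbf{x})+\tilde\beta Q^{-t}+\sum_{z=1}^{t-1}(-1)^{t-z+1}\big(p^{\langle Q\rangle}_z(q;\beta)(\mathbf{x})-q^{-2(t-z)}\tilde\beta Q^{-z}\big)e_{t-z}(\mathbf{x})$; (ii) $p^{\langle Q\rangle}_{k+t}(q;\beta)(\mathbf{x})=Q^{-1}p^{\langle Q\rangle}_{k+t-1}(q;\beta)(\mathbf{x})+\sum_{z=0}^{k-1}(-1)^{k-z+1}\big(p^{\langle Q\rangle}_{t+z}(q;\beta)(\mathbf{x})-Q^{-1}p^{\langle Q\rangle}_{t+z-1}(q;\beta)(\mathbf{x})\big)e_{k-z}(\mathbf{x})$, where $p^{\langle Q\rangle}_0(q;\beta)(\mathbf{x}):=\frac{1-(\beta q^k)^{-2}}{q-q^{-1}}$.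
   Context: $[t]=(q^t-q^{-t})/(q-q^{-1})$. $e_t$ is the elementary symmetric polynomial ($e_0=1$). For $t>0$, $p_t(q)(\mathbf{x})=\sum_{\lambda\vdash t,\ \ell(\lambda)\le k}q^{-\ell(\lambda)}(q-q^{-1})^{\ell(\lambda)-1}m_\lambda(\mathbf{x})$ ($\lambda$ partitions of $t$ with at most $k$ nonzero parts, $m_\lambda$ monomial symmetric polynomial), and $p^{\langle Q\rangle}_t(q;\beta)(\mathbf{x})=p_t(q)(\mathbf{x})+\tilde\beta Q^{-t}+(q-q^{-1})\sum_{z=1}^{t-1}\tilde\beta Q^{-t+z}p_z(q)(\mathbf{x})$. *)

From HB Require Import structures.
From mathcomp Require Import all_boot all_order all_algebra.
From mathcomp Require Import complex.
From mathcomp Require Import Rstruct.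
Set Implicit Arguments. Unset Strict Implicit. Unset Printing Implicit Defensive.
Import Order.TTheory GRing.Theory Num.Theory.
Local Open Scope ring_scope.

Definition CC : Type := (Rdefinitions.R)[i].
Definition CC_fieldType : fieldType := (Rdefinitions.R)[i].

Section Defs.
Variable C : fieldType.

Definition qint (q : C) (t : nat) : C := (q ^+ t - q ^- t) / (q - q^-1).

Definition elem_sym (k : nat) (t : nat) (x : 'I_k -> C) : C :=
  \sum_(A : {set 'I_k} | #|A| == t) \prod_(i in A) x i.

Definition expvec (k t : nat) := {ffun 'I_k -> 'I_t.+1}.

Definition shape (k t : nat) (a : expvec k t) : seq nat :=
  sort geq [seq val (a i) | i <- enum 'I_k & val (a i) != 0%N].

Definition partitions_le (k t : nat) : seq (seq nat) :=
  [seq l <- undup [seq shape a | a <- enum {: expvec k t}] | sumn l == t].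

Definition msym (k t : nat) (l : seq nat) (x : 'I_k -> C) : C :=
  \sum_(a : expvec k t | shape a == l) \prod_(i < k) x i ^+ val (a i).

Definition pq (q : C) (k t : nat) (x : 'I_k -> C) : C :=
  \sum_(l <- partitions_le k t)
     q ^- (size l) * (q - q^-1) ^+ (size l).-1 * msym t l x.

Definition btilde (q beta : C) : C := (q - q^-1)^-1 * (1 - beta ^- 2).

(* p^<Q>_t(q;beta)(x), with the convention for t = 0 from part (ii) *)
Definition pQ (q beta Q : C) (k t : nat) (x : 'I_k -> C) : C :=
  if t == 0%N then (1 - (beta * q ^+ k) ^- 2) / (q - q^-1)
  else pq q t x + btilde q beta * Q ^- t
       + (q - q^-1) * \sum_(1 <= z < t) btilde q beta * Q ^- (t - z) * pq q z x.

End Defs.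

From Pilot Require Import Defs.
From HB Require Import structures.
From mathcomp Require Import all_boot all_order all_algebra.
From mathcomp Require Import complex Rstruct.
From mathcomp Require Import ring zify.
Set Implicit Arguments. Unset Strict Implicit. Unset Printing Implicit Defensive.
Import Order.TTheory GRing.Theory Num.Theory.
Local Open Scope ring_scope.

(* With d = q - q^-1, a monomial of p_m(q) with s nonzero exponents carries the
   weight q^-s d^(s-1), so the p_m(q) have the generating function
     1 + d \sum_(m > 0) p_m(q) X^m = \prod_i (1 - q^-2 x_i X) / (1 - x_i X),
   and that of the p^<Q>_m is this series times (1 - beta^-2 Q^-1 X) / (1 - Q^-1 X).
   Multiplying by \prod_i (1 - x_i X) = \sum_m (-1)^m e_m X^m and comparing the
   coefficients of X^t gives (i).  Multiplying also by 1 - Q^-1 X leaves a polynomial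
   of degree k + 1; replacing the constant term 1 of the series of the p^<Q>_m by
   d p^<Q>_0 cancels its top coefficient, so all coefficients of degree > k vanish,
   which is (ii).  Power series are handled through truncations that agree below a
   given degree. *)

Section TruncatedPolynomials.
Variable R : nzRingType.

Definition eqmodX n (p p' : {poly R}) := forall i, (i < n)%N -> p`_i = p'`_i.

Lemma eqmodXM n p p' s s' :
  eqmodX n p p' -> eqmodX n s s' -> eqmodX n (p * s) (p' * s').
Proof.
move=> eq_p eq_s i lt_in; rewrite !coefM; apply: eq_bigr => j _.
have lt_ji := ltn_ord j; rewrite eq_p ?eq_s //; lia.
Qed.

Lemma eqmodX_prod n I (r : seq I) (f g : I -> {poly R}) :
  (forall i, eqmodX n (f i) (g i)) -> eqmodX n (\prod_(i <- r) f i) (\prod_(i <- r) g i).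
Proof. by move=> eq_fg; apply: (big_ind2 (eqmodX n)) => // *; apply: eqmodXM. Qed.

Lemma coefM_ends (p s : {poly R}) m : (0 < m)%N ->
  (p * s)`_m = p`_0 * s`_m + \sum_(1 <= j < m) p`_j * s`_(m - j) + p`_m * s`_0.
Proof.
move=> m_gt0; rewrite coefM -(big_mkord xpredT (fun j => p`_j * s`_(m - j))).
by rewrite big_nat_recr //= big_ltn // subn0 subnn.
Qed.

Lemma coefM_size_le (b p : {poly R}) k t : (size p <= k.+1)%N ->
  (b * p)`_(t + k) = \sum_(0 <= z < k.+1) b`_(t + z) * p`_(k - z).
Proof.
move=> /leq_sizeP p_high.
rewrite coefM -(big_mkord xpredT (fun j => b`_j * p`_(t + k - j))).
rewrite (big_cat_nat (n := t)) //=; last by lia.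
rewrite big_nat big1 ?add0r => [|j /andP[_ lt_jt]]; last by rewrite p_high ?mulr0 //; lia.
rewrite -{1}[t]add0n big_addn (_ : _ - t = k.+1)%N; last by lia.
by apply: eq_big_nat => z _; rewrite addnC; congr (_ * p`_ _); lia.
Qed.

End TruncatedPolynomials.

Section ScaledGeometricSeries.
Variable R : comNzRingType.

Definition sgeom (s y : R) (N : nat) : {poly R} :=
  \poly_(n < N.+1) ((if n == 0%N then 1 else s) * y ^+ n).

Lemma coef_sgeom s y N n : (n <= N)%N ->
  (sgeom s y N)`_n = (if n == 0%N then 1 else s) * y ^+ n.
Proof. by rewrite coef_poly ltnS => ->. Qed.

Lemma sgeom0 s y : sgeom s y 0 = 1.
Proof. by rewrite /sgeom poly_def big_ord1 expr0 mulr1 scale1r expr0. Qed.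

Lemma sgeom_trunc s y N m : (m <= N)%N -> eqmodX m.+1 (sgeom s y N) (sgeom s y m).
Proof. by move=> le_mN i lt_im; rewrite !coef_sgeom //; lia. Qed.

Lemma sgeom_factor s y N :
  eqmodX N.+1 ((1 - y%:P * 'X) * sgeom s y N) (1 - ((1 - s) * y)%:P * 'X).
Proof.
move=> i lt_iN; rewrite mulrBl mul1r -mulrA coefB coefCM coefXM !coefB coef1 coefCM coefX.
by case: i lt_iN => [|[|i]] lt_iN /=; rewrite !coef_sgeom /= ?exprS; try lia; ring.
Qed.

Lemma coef_prod_poly k (f : nat -> R) (y : 'I_k -> R) N m :
  (\prod_i \poly_(n < N.+1) (f n * y i ^+ n))`_m
  = \sum_(a : {ffun 'I_k -> 'I_N.+1} | (\sum_i a i == m)%N) \prod_i (f (a i) * y i ^+ a i).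
Proof.
under eq_bigr do rewrite poly_def.
rewrite bigA_distr_bigA coef_sum [RHS]big_mkcond /=; apply: eq_bigr => a _.
rewrite scaler_prod prodrXr coefZ coefXn eq_sym.
by case: eqP => _; rewrite ?mulr1 ?mulr0.
Qed.

End ScaledGeometricSeries.

Section ElementarySymmetric.
Variables (F : fieldType) (k : nat).
Implicit Types (y : 'I_k -> F) (m : nat).

Lemma elem_sym0 y : elem_sym 0 y = 1.
Proof. by rewrite /elem_sym (big_pred1 set0) ?big_set0 // => A; rewrite /= cards_eq0. Qed.

Lemma elem_sym_eq0 y m : (k < m)%N -> elem_sym m y = 0.
Proof.
move=> lt_km; rewrite /elem_sym big_pred0 // => A.
by apply/negbTE; have := max_card A; rewrite card_ord; lia.
Qed.

Lemma elem_symZ (a : F) y m : elem_sym m (fun i => a * y i) = a ^+ m * elem_sym m y.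
Proof.
rewrite /elem_sym mulr_sumr; apply: eq_bigr => A /eqP <-.
by rewrite big_split /= prodr_const.
Qed.

Lemma coef_prod_1subX y m : (\prod_i (1 - (y i)%:P * 'X))`_m = (-1) ^+ m * elem_sym m y.
Proof.
under eq_bigr do rewrite addrC -mulNr -polyCN.
rewrite bigA_distr coef_sum /elem_sym mulr_sumr [RHS]big_mkcond /=.
apply: eq_bigr => A _.
rewrite -big_mkcond /= big_split /= -rmorph_prod prodr_const coefCM coefXn prodrN.
by rewrite eq_sym; case: eqP => [<-|_]; rewrite ?mulr1 ?mulr0.
Qed.

End ElementarySymmetric.

Section Partitions.
Variables (k t : nat).
Implicit Type a : expvec k t.

Lemma sumn_shape a : sumn (Defs.shape a) = (\sum_i a i)%N.
Proof.
rewrite (perm_sumn (permEl (perm_sort _ _))) sumnE big_map big_filter big_mkcond enumT /=.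
by apply: eq_bigr => i _; case: eqP.
Qed.

Lemma size_shape a : size (Defs.shape a) = #|[pred i | val (a i) != 0%N]|.
Proof. by rewrite size_sort size_map size_filter enumT cardE /enum_mem size_filter. Qed.

Lemma shape_partitions_le a : (Defs.shape a \in partitions_le k t) = (\sum_i a i == t)%N.
Proof. by rewrite mem_filter mem_undup map_f ?mem_enum // andbT sumn_shape. Qed.

Lemma partitions_le_uniq : uniq (partitions_le k t).
Proof. by rewrite filter_uniq // undup_uniq. Qed.

Lemma sum_msym (F : fieldType) (x : 'I_k -> F) (G : seq nat -> F) :
  \sum_(l <- partitions_le k t) G l * msym t l x
  = \sum_(a : expvec k t | (\sum_i a i == t)%N) G (Defs.shape a) * \prod_i x i ^+ a i.
Proof.
under eq_bigr do rewrite /msym mulr_sumr big_mkcond.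
rewrite exchange_big [RHS]big_mkcond /=; apply: eq_bigr => a _.
rewrite -shape_partitions_le; case: ifP => [l_a|not_l_a].
  rewrite (bigD1_seq _ l_a partitions_le_uniq) /= eqxx [X in _ + X]big1_seq ?addr0 // => l.
  by rewrite eq_sym => /andP[/negPf -> _].
by rewrite big1_seq // => l /= l_l; case: eqP => // eq_al; rewrite eq_al l_l in not_l_a.
Qed.

End Partitions.

Lemma coef_prod_sgeom (F : fieldType) (q : F) k (y : 'I_k -> F) m : (0 < m)%N ->
  (\prod_i sgeom (q^-1 * (q - q^-1)) (y i) m)`_m = (q - q^-1) * pq q m y.
Proof.
move=> m_gt0; rewrite coef_prod_poly /pq mulr_sumr.
under [RHS]eq_bigr do rewrite mulrA.
rewrite sum_msym; apply: eq_bigr => a /eqP sum_a.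
have shape_gt0 : (0 < size (Defs.shape a))%N.
  by rewrite lt0n size_eq0; apply: contraTneq m_gt0 => e; rewrite -sum_a -sumn_shape e.
rewrite big_split /= (eq_bigr (fun i => if val (a i) != 0%N then q^-1 * (q - q^-1) else 1)).
  rewrite -big_mkcond prodr_const -size_shape.
  by case: size shape_gt0 => // s _; rewrite exprMn exprVn /= (exprS (q - q^-1)); ring.
by move=> i _; case: eqP.
Qed.

Lemma pQ_gt0 (F : fieldType) (q beta Q : F) k (x : 'I_k -> F) m : (0 < m)%N ->
  pQ q beta Q m x = pq q m x + btilde q beta * Q ^- m
    + (q - q^-1) * \sum_(1 <= z < m) btilde q beta * Q ^- (m - z) * pq q z x.
Proof. by case: m. Qed.

Section GeneratingSeries.
Variables (F : fieldType) (q beta Q : F) (k : nat) (x : 'I_k -> F).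
Hypothesis d_neq0 : q - q^-1 != 0.

Local Notation d := (q - q^-1).
Local Notation pQx m := (pQ q beta Q m x).

Lemma q_neq0 : q != 0.
Proof. by apply: contraNneq d_neq0 => ->; rewrite invr0 subr0. Qed.

Lemma d_btilde : d * btilde q beta = 1 - beta ^- 2.
Proof. by rewrite /btilde mulrA mulfV ?mul1r. Qed.

Lemma d_pQ0_sub1 : d * pQx 0 - 1 = - (beta ^- 2 * q ^- (2 * k)).
Proof. by rewrite mulrC divfK // exprMn invfM -exprM mulnC addrAC subrr add0r. Qed.

Let genP N := \prod_i sgeom (q^-1 * d) (x i) N.
Let genS N := sgeom (d * btilde q beta) Q^-1 N.
Let E := \prod_i (1 - (x i)%:P * 'X).
Let E' := \prod_i (1 - (q^-2 * x i)%:P * 'X).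

Lemma coefE n : E`_n = (-1) ^+ n * elem_sym n x.
Proof. exact: coef_prod_1subX. Qed.

Lemma coefE' n : E'`_n = (-1) ^+ n * q ^- (2 * n) * elem_sym n x.
Proof. by rewrite coef_prod_1subX elem_symZ exprVn -exprM mulrA. Qed.

Lemma size_E : (size E <= k.+1)%N.
Proof. by apply/leq_sizeP => j lt_kj; rewrite coefE elem_sym_eq0 ?mulr0. Qed.

Lemma coef_genP N m : (m <= N)%N ->
  (genP N)`_m = if m == 0%N then 1 else d * pq q m x.
Proof.
move=> le_mN; rewrite (eqmodX_prod _ (fun i => sgeom_trunc _ _ le_mN)) //.
case: m le_mN => [|m] _ /=; last exact: coef_prod_sgeom.
by under eq_bigr do rewrite sgeom0; rewrite prodr_const expr1n coef1.
Qed.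

Lemma coef_genS N m : (m <= N)%N ->
  (genS N)`_m = if m == 0%N then 1 else d * btilde q beta * Q ^- m.
Proof.
move=> le_mN; rewrite coef_sgeom // exprVn.
by case: eqP => [->|_]; rewrite ?expr0 ?invr1 ?mulr1.
Qed.

Lemma coef_genPS0 N : (genP N * genS N)`_0 = 1.
Proof. by rewrite coef0M coef_genP // coef_genS // mul1r. Qed.

Lemma coef_genPS N m : (0 < m)%N -> (m <= N)%N -> (genP N * genS N)`_m = d * pQx m.
Proof.
move=> m_gt0 le_mN; rewrite coefM_ends // pQ_gt0 //.
rewrite coef_genP // coef_genS // coef_genP // coef_genS //=.
rewrite (negPf (lt0n_neq0 m_gt0)) (eq_big_nat _ _
  (F2 := fun j => d * (d * (btilde q beta * Q ^- (m - j) * pq q j x)))).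
  by rewrite -!mulr_sumr; ring.
move=> j /andP[j_gt0 lt_jm]; rewrite coef_genP ?coef_genS; try lia.
by rewrite !ifN; try lia; ring.
Qed.

Lemma sqrq_sub1_neq0 : q * q - 1 != 0.
Proof. by rewrite -[1](mulfV q_neq0) -mulrBr mulf_neq0 ?q_neq0. Qed.

Lemma one_sub_qd : 1 - q^-1 * d = q ^- 2.
Proof. by field; rewrite q_neq0. Qed.

Lemma genP_elem N : eqmodX N.+1 (E * genP N) E'.
Proof.
by rewrite -big_split; apply: eqmodX_prod => i; rewrite -one_sub_qd; apply: sgeom_factor.
Qed.

Lemma genS_factor N :
  eqmodX N.+1 ((1 - (Q^-1)%:P * 'X) * genS N) (1 - (beta ^- 2 * Q^-1)%:P * 'X).
Proof. by rewrite -[beta ^- 2](subKr 1) -d_btilde; apply: sgeom_factor. Qed.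

Lemma coef_genPS_E N n : (n <= N)%N -> (genP N * genS N * E)`_n = (genS N * E')`_n.
Proof.
move=> le_nN; rewrite [genP N * _]mulrC -mulrA [genP N * E]mulrC.
exact: (eqmodXM (fun _ _ => erefl) (genP_elem (N := N))).
Qed.

Lemma pQ_elem_rec t : (0 < t)%N ->
  pQx t =
    (-1) ^+ (t - 1) * q ^- t * qint q t * elem_sym t x + btilde q beta * Q ^- t
    + \sum_(1 <= z < t) (-1) ^+ (t - z + 1)
        * (pQx z - q ^- (2 * (t - z)) * btilde q beta * Q ^- z)
        * elem_sym (t - z) x.
Proof.
move=> t_gt0; have key := coef_genPS_E (leqnn t).
rewrite (coefM_ends (genP t * genS t)) // (coefM_ends (genS t)) // in key.
rewrite coef_genPS0 coef_genPS // !(coef_genS (N := t)) // in key.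
rewrite eqxx (negPf (lt0n_neq0 t_gt0)) [E`_0]coefE [E'`_0]coefE' elem_sym0 expr0 !mulr1 in key.
have sumY : \sum_(1 <= j < t) (genP t * genS t)`_j * E`_(t - j)
    = \sum_(1 <= j < t) d * pQx j * ((-1) ^+ (t - j) * elem_sym (t - j) x).
  by apply: eq_big_nat => j /andP[j_gt0 lt_jt]; rewrite coef_genPS ?coefE //; lia.
have sumS : \sum_(1 <= j < t) (genS t)`_j * E'`_(t - j)
    = \sum_(1 <= j < t) d * btilde q beta * Q ^- j
        * ((-1) ^+ (t - j) * q ^- (2 * (t - j)) * elem_sym (t - j) x).
  by apply: eq_big_nat => j /andP[j_gt0 lt_jt]; rewrite coef_genS ?coefE' ?ifN //; lia.
have sum_eq : d * \sum_(1 <= z < t) (-1) ^+ (t - z + 1)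
        * (pQx z - q ^- (2 * (t - z)) * btilde q beta * Q ^- z) * elem_sym (t - z) x
    = \sum_(1 <= j < t) d * btilde q beta * Q ^- j
        * ((-1) ^+ (t - j) * q ^- (2 * (t - j)) * elem_sym (t - j) x)
      - \sum_(1 <= j < t) d * pQx j * ((-1) ^+ (t - j) * elem_sym (t - j) x).
  by rewrite mulr_sumr -sumrB; apply: eq_big_nat => z _; rewrite addn1 exprS; ring.
rewrite sumY sumS coefE coefE' addrC in key; move/(canRL (addrK _)): key => dpQ.
have sign : (-1) ^+ t = - (-1) ^+ (t - 1) :> F.
  by rewrite -{1}(subnK t_gt0) exprD expr1 mulrN1.
have qt_neq0 : q ^+ t != 0 by rewrite expf_neq0 // q_neq0.
apply: (mulfI d_neq0); rewrite dpQ mulrDr sum_eq sign /qint mul2n -addnn exprD.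
(* abstracting [Q ^- t] spares [field] the side condition [Q != 0] *)
move: (Q ^- t) => Qt; field.
by rewrite q_neq0 sqrq_sub1_neq0 qt_neq0 oner_neq0.
Qed.

Let genY N := genP N * genS N + (d * pQx 0 - 1)%:P.

Lemma coef_genY N m : (m <= N)%N -> (genY N)`_m = d * pQx m.
Proof.
rewrite /genY coefD coefC; case: m => [|m] le_mN; first by rewrite coef_genPS0 addrC subrK.
by rewrite coef_genPS ?addr0.
Qed.

Lemma coef_genYX N j : (0 < j)%N -> (j <= N)%N ->
  ((1 - (Q^-1)%:P * 'X) * genY N)`_j = d * (pQx j - Q^-1 * pQx j.-1).
Proof.
move=> j_gt0 le_jN; rewrite mulrBl mul1r -mulrA coefB coefCM coefXM.
by rewrite (negPf (lt0n_neq0 j_gt0)) !coef_genY //; [ring | lia].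
Qed.

Lemma coef_genYX_E N n : (k < n)%N -> (n <= N)%N ->
  ((1 - (Q^-1)%:P * 'X) * genY N * E)`_n = 0.
Proof.
move=> lt_kn le_nN.
have -> : (1 - (Q^-1)%:P * 'X) * genY N * E
    = (E * genP N) * ((1 - (Q^-1)%:P * 'X) * genS N)
      + (d * pQx 0 - 1)%:P * ((1 - (Q^-1)%:P * 'X) * E) by rewrite /genY; ring.
rewrite coefD (eqmodXM (genP_elem (N := N)) (genS_factor (N := N))) //.
rewrite mulrBr mulr1 mulrA coefB coefMX coefMC coefCM (mulrBl E) mul1r -mulrA.
rewrite coefB coefCM coefXM (negPf (lt0n_neq0 (leq_ltn_trans (leq0n k) lt_kn))).
rewrite !coefE !coefE' [elem_sym n x]elem_sym_eq0 //.
have [-> /=|n_neq] := eqVneq n k.+1; first by rewrite d_pQ0_sub1; ring.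
by rewrite [elem_sym _ x]elem_sym_eq0; [ring | lia].
Qed.

Lemma pQ_shift_rec t : (0 < t)%N ->
  pQx (k + t) =
    Q^-1 * pQx (k + t - 1)
    + \sum_(0 <= z < k) (-1) ^+ (k - z + 1)
        * (pQx (t + z) - Q^-1 * pQx (t + z - 1)) * elem_sym (k - z) x.
Proof.
move=> t_gt0; set B := (1 - (Q^-1)%:P * 'X) * genY (k + t).
have BE : (B * E)`_(t + k) = 0 by apply: coef_genYX_E; lia.
rewrite coefM_size_le ?size_E // big_nat_recr //= subnn addnC in BE.
rewrite coefE expr0 elem_sym0 mulr1 coef_genYX ?addn_gt0 ?t_gt0 ?orbT // in BE.
move/eqP: BE; rewrite addrC addr_eq0 => /eqP BE.
have sum_eq : d * \sum_(0 <= z < k) (-1) ^+ (k - z + 1)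
        * (pQx (t + z) - Q^-1 * pQx (t + z - 1)) * elem_sym (k - z) x
    = - \sum_(0 <= z < k) B`_(t + z) * E`_(k - z).
  rewrite mulr_sumr -sumrN; apply: eq_big_nat => z /andP[_ lt_zk].
  by rewrite coef_genYX ?coefE ?subn1 ?addn1 ?exprS; [ring | lia | lia].
apply: (mulfI d_neq0); rewrite mulrDr sum_eq -BE subn1; ring.
Qed.

End GeneratingSeries.

Theorem mainTheorem20 (q : CC_fieldType) (k : nat) (beta Q : CC_fieldType)
    (hq0 : q != 0) (hqroot : forall n : nat, (0 < n)%N -> q ^+ n != 1)
    (hk : (0 < k)%N) (hQ : Q != 0) (hbeta : beta != 0)
    (x : 'I_k -> CC_fieldType) (t : nat) (ht : (0 < t)%N) :
  pQ q beta Q t x =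
    (-1) ^+ (t - 1) * q ^- t * qint q t * elem_sym t x + btilde q beta * Q ^- t
    + \sum_(1 <= z < t) (-1) ^+ (t - z + 1)
        * (pQ q beta Q z x - q ^- (2 * (t - z)) * btilde q beta * Q ^- z)
        * elem_sym (t - z) x
  /\
  pQ q beta Q (k + t) x =
    Q^-1 * pQ q beta Q (k + t - 1) x
    + \sum_(0 <= z < k) (-1) ^+ (k - z + 1)
        * (pQ q beta Q (t + z) x - Q^-1 * pQ q beta Q (t + z - 1) x)
        * elem_sym (k - z) x.
Proof.
have d_neq0 : q - q^-1 != 0.
  have := hqroot 2%N isT; apply: contraNneq => /eqP; rewrite subr_eq0 => /eqP eq_q.
  by rewrite expr2 {2}eq_q mulfV.
by split; [exact: pQ_elem_rec | exact: pQ_shift_rec].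
Qed.
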